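(* Let $m\ge1$ be an integer, $\Gamma_1,\Gamma_2$ co-prime integers with $1<\Gamma_1<\Gamma_2$, $m_1=m\Gamma_1$, $m_2=m\Gamma_2$, and let $1\le j\le K+1$. Let $N$ be an integer with $0\le N<\min\big(m_2(1+\ddot n_{2,j}),\,m_1(1+\ddot n_{1,j})\big)$, with remainders $r_i=|N|_{m_i}$, and let $\tilde r_1,\tilde r_2$ be erroneous remainders whose errors satisfy $$-\frac{\sigma_j}{2}\le\frac{\Delta r_1-\Delta r_2}{m}<\frac{\sigma_j}{2}.$$ Let $\mathbf q_{21}=(\tilde r_1-\tilde r_2)/m$. Then: (1) if $\mathbf q_{21}\ge\sigma_j/2$, then $r_1>r_2$; (2) if $\mathbf q_{21}<-\sigma_j/2$, then $r_1<r_2$; (3) if $-\sigma_j/2\le\mathbf q_{21}<\sigma_j/2$, then $r_1=r_2$.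
   Context: $|a|_b$ is the remainder of the integer $a$ modulo the positive integer $b$. Erroneous remainders are integers $\tilde r_i$ with $0\le\tilde r_i<m_i$, errors $\Delta r_i=\tilde r_i-r_i$. Euclidean sequence: $\sigma_{-1}=\Gamma_2$, $\sigma_0=\Gamma_1$, $\sigma_i=|\sigma_{i-2}|_{\sigma_{i-1}}$ for $i\ge1$; $K\ge0$ is the index with $\sigma_K>1$ and $\sigma_{K+1}=1$. For $1\le n<\Gamma_1$, $S_{2,n}=\{|t\Gamma_2|_{\Gamma_1}: 0\le t\le n\}$ and $d_{2,n}$ is the minimum distance between two distinct elements of $S_{2,n}$; for $1\le n<\Gamma_2$, $S_{1,n}=\{|t\Gamma_1|_{\Gamma_2}: 0\le t\le n\}$ and $d_{1,n}$ is defined likewise. $\ddot n_{2,j}=\max\{n:1\le n<\Gamma_1,\ d_{2,n}\ge\sigma_j\}$, $\ddot n_{1,j}=\max\{n:1\le n<\Gamma_2,\ d_{1,n}\ge\sigma_j\}$. *)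

From HB Require Import structures.
From mathcomp Require Import all_boot all_order all_algebra.
Set Implicit Arguments. Unset Strict Implicit. Unset Printing Implicit Defensive.
Import Order.TTheory GRing.Theory Num.Theory.

(* Euclidean sequence: sig_pair G1 G2 i = (sigma_{i-1}, sigma_i). *)
Fixpoint sig_pair (G1 G2 : nat) (i : nat) : nat * nat :=
  match i with
  | 0 => (G2, G1)
  | i'.+1 => let p := sig_pair G1 G2 i' in (p.2, p.1 %% p.2)
  end.

(* sigma G1 G2 i = sigma_i  (i >= 0), with sigma_{-1} = G2, sigma_0 = G1,
   sigma_i = |sigma_{i-2}|_{sigma_{i-1}}. *)
Definition sigma (G1 G2 i : nat) : nat := (sig_pair G1 G2 i).2.

(* The default value b of the minimum is never reached
   when there are two distinct elements (all distances are < b). *)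
Definition dmin (a b n : nat) : nat :=
  \big[minn/b]_(t < n.+1)
    \big[minn/b]_(t' < n.+1 | (t * a) %% b != (t' * a) %% b)
      `|Posz ((t * a) %% b) - Posz ((t' * a) %% b)|%N.

(* d_{2,n} : S_{2,n} = { |t G2|_{G1} }, and d_{1,n} : S_{1,n} = { |t G1|_{G2} } *)
Definition d2 (G1 G2 n : nat) : nat := dmin G2 G1 n.
Definition d1 (G1 G2 n : nat) : nat := dmin G1 G2 n.

Definition nddot2 (G1 G2 j : nat) : nat :=
  \max_(n < G1 | (1 <= n) && (sigma G1 G2 j <= d2 G1 G2 n)) n.
Definition nddot1 (G1 G2 j : nat) : nat :=
  \max_(n < G2 | (1 <= n) && (sigma G1 G2 j <= d1 G1 G2 n)) n.

From HB Require Import structures.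
From mathcomp Require Import all_boot all_order all_algebra.
From mathcomp Require Import zify ring lra.
Import Order.TTheory GRing.Theory Num.Theory.

Set Implicit Arguments.
Unset Strict Implicit.
Unset Printing Implicit Defensive.

(* Write N = M m + a with a < m, so that r_i = |M|_{Gamma_i} m + a.  If the
   residues u_i = |M|_{Gamma_i} differ, say u_1 < u_2, then t = M div Gamma_1
   satisfies |t Gamma_1|_{Gamma_2} = u_2 - u_1, and t <= \ddot n_{1,j} by the
   bound on N.  So u_2 - u_1 is the distance between the distinct elements 0
   and |t Gamma_1|_{Gamma_2} of S_{1,\ddot n_{1,j}}, hence at least sigma_j.
   Thus r_1 = r_2 or |r_1 - r_2| >= m sigma_j, and an error of less than
   sigma_j / 2 in (r_1 - r_2) / m cannot hide which case occurs. *)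

Lemma bigminn_inf (I : finType) (j : I) (P : pred I) (F : I -> nat) b x :
  P j -> F j <= x -> \big[minn/b]_(i | P i) F i <= x.
Proof. by rewrite -minEnat; exact: (@bigmin_inf _ nat). Qed.

Lemma dmin_le_mulmod a b n k :
  k <= n -> 0 < k * a %% b -> dmin a b n <= k * a %% b.
Proof.
rewrite -ltnS /dmin => lt_kn kab_gt0.
apply: (@bigminn_inf _ (Ordinal lt_kn) xpredT) => //=.
apply: (@bigminn_inf _ ord0 (fun t : 'I_n.+1 => k * a %% b != t * a %% b)).
  by rewrite /= mul0n mod0n -lt0n.
by rewrite /= mul0n mod0n subr0 absz_nat.
Qed.

Definition mulmod_gap (a b n s : nat) :=
  forall k, k <= n -> 0 < k * a %% b -> s <= k * a %% b.

Lemma mulmod_gap_dmin a b n s : s <= dmin a b n -> mulmod_gap a b n s.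
Proof.
move=> s_le k le_kn kab_gt0; exact: leq_trans s_le (dmin_le_mulmod le_kn kab_gt0).
Qed.

Lemma mulmod_gap_max a b s :
  mulmod_gap a b (\max_(n < b | (1 <= n) && (s <= dmin a b n)) n) s.
Proof.
pose P := [pred n : 'I_b | (1 <= n) && (s <= dmin a b n)]; move=> k.
case: (posnP #|P|) => [/card0_eq P0 | /(eq_bigmax_cond val)[n]].
  rewrite big_pred0 // leqn0 => /eqP->.
  by rewrite mul0n mod0n.
rewrite inE => /andP[_ s_le] ->.
exact: mulmod_gap_dmin.
Qed.

Lemma mulmod_divn_sub M G1 G2 :
  0 < G2 -> M %% G1 <= M %% G2 -> M %/ G1 * G1 %% G2 = M %% G2 - M %% G1.
Proof.
move=> G2_gt0 le_u12.
have -> : M %/ G1 * G1 = M %/ G2 * G2 + (M %% G2 - M %% G1).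
  by have := divn_eq M G1; have := divn_eq M G2; lia.
rewrite modnMDl modn_small //.
by have := ltn_pmod M G2_gt0; lia.
Qed.

Lemma residues_equal_or_apart G1 G2 n1 n2 s M :
  0 < G1 -> 0 < G2 -> M %/ G1 <= n1 -> M %/ G2 <= n2 ->
  mulmod_gap G1 G2 n1 s -> mulmod_gap G2 G1 n2 s ->
  [\/ M %% G1 = M %% G2, M %% G2 + s <= M %% G1 | M %% G1 + s <= M %% G2].
Proof.
wlog le_u12 : G1 G2 n1 n2 / M %% G1 <= M %% G2.
  move=> sym G1_gt0 G2_gt0 le1 le2 gap1 gap2.
  case: (leqP (M %% G1) (M %% G2)) => [le_u12 | /ltnW le_u21].
    exact: (sym G1 G2 n1 n2).
  case: (sym G2 G1 n2 n1) => // [->|le|le].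
  - exact: Or31.
  - exact: Or33.
  - exact: Or32.
move=> _ G2_gt0 le1 _ gap1 _.
move: (le_u12); rewrite leq_eqVlt => /orP[/eqP->|lt_u12]; first exact: Or31.
apply: Or33; rewrite -leq_subRL // -mulmod_divn_sub //.
by apply: gap1 le1 _; rewrite mulmod_divn_sub // subn_gt0.
Qed.

Lemma modnM_divn N m G : N %% (m * G) = N %/ m %% G * m + N %% m.
Proof.
rewrite [m * G]mulnC {1}(divn_eq (N %% (G * m)) m) -modn_divl.
by rewrite modn_dvdm // dvdn_mull.
Qed.

Lemma remainders_equal_or_apart m G1 G2 n1 n2 s N :
  0 < m -> 0 < G1 -> 0 < G2 ->
  N < m * G1 * n1.+1 -> N < m * G2 * n2.+1 ->
  mulmod_gap G1 G2 n1 s -> mulmod_gap G2 G1 n2 s ->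
  [\/ N %% (m * G1) = N %% (m * G2),
      N %% (m * G2) + m * s <= N %% (m * G1)
    | N %% (m * G1) + m * s <= N %% (m * G2)].
Proof.
move=> m_gt0 G1_gt0 G2_gt0 N_lt1 N_lt2 gap1 gap2.
have quo_le G n : 0 < G -> N < m * G * n.+1 -> N %/ m %/ G <= n.
  by move=> G_gt0 N_lt; rewrite -ltnS -divnMA ltn_divLR ?muln_gt0 ?m_gt0 // mulnC.
rewrite !modnM_divn.
case: (residues_equal_or_apart G1_gt0 G2_gt0 (quo_le _ _ G1_gt0 N_lt1)
  (quo_le _ _ G2_gt0 N_lt2) gap1 gap2) => [->|le_u21|le_u12].
- exact: Or31.
- by apply: Or32; nia.
- by apply: Or33; nia.
Qed.

Section ScaledRemainders.

Variable R : realFieldType.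
Local Open Scope ring_scope.

Lemma le_scaled_gap (m s a b : nat) :
  (0 < m)%N -> (b + m * s <= a)%N -> s%:R <= ((a%:Z - b%:Z)%:~R / m%:R : R).
Proof.
move=> m_gt0 le_ba; rewrite ler_pdivlMr ?ltr0n //.
have : (b + m * s)%:R <= a%:R :> R by rewrite ler_nat.
by rewrite rmorphB /= !natrD !natrM; lra.
Qed.

Lemma decide_remainder_order (m s r1 r2 : nat) (e : R) :
  (0 < m)%N -> - (s%:R / 2) <= e -> e < s%:R / 2 ->
  [\/ r1 = r2, (r2 + m * s <= r1)%N | (r1 + m * s <= r2)%N] ->
  let q := e + (r1%:Z - r2%:Z)%:~R / m%:R in
  [/\ s%:R / 2 <= q -> (r2 < r1)%N, q < - (s%:R / 2) -> (r1 < r2)%N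
    & - (s%:R / 2) <= q -> q < s%:R / 2 -> r1 = r2].
Proof.
move=> m_gt0 le_e lt_e cases.
have s_gt0 : (0 < s)%N by rewrite -(ltr0n R); lra.
have ms_gt0 : (0 < m * s)%N by rewrite muln_gt0 m_gt0.
case: cases => [<- | le21 | le12] /=.
- by rewrite subrr mul0r addr0; split=> // *; exfalso; lra.
- have := le_scaled_gap m_gt0 le21 => d_ge.
  by split=> *; [lia | exfalso; lra..].
- have := le_scaled_gap m_gt0 le12.
  rewrite -opprB rmorphN mulNr => d_ge.
  by split=> *; [exfalso; lra | lia | exfalso; lra].
Qed.

End ScaledRemainders.

Theorem lemma7 (m G1 G2 K j N rt1 rt2 : nat) :
  1 <= m -> coprime G1 G2 -> 1 < G1 -> G1 < G2 ->
  1 < sigma G1 G2 K -> sigma G1 G2 K.+1 = 1 ->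
  1 <= j <= K.+1 ->
  N < minn (m * G2 * (1 + nddot2 G1 G2 j)) (m * G1 * (1 + nddot1 G1 G2 j)) ->
  rt1 < m * G1 -> rt2 < m * G2 ->
  (- ((sigma G1 G2 j)%:R / 2%:R) <=
     (((rt1%:Z - (N %% (m * G1))%:Z) - (rt2%:Z - (N %% (m * G2))%:Z))%:~R / m%:R : rat))%R ->
  ((((rt1%:Z - (N %% (m * G1))%:Z) - (rt2%:Z - (N %% (m * G2))%:Z))%:~R / m%:R : rat)
     < (sigma G1 G2 j)%:R / 2%:R)%R ->
  [/\ ((sigma G1 G2 j)%:R / 2%:R <= ((rt1%:Z - rt2%:Z)%:~R / m%:R : rat))%R ->
        N %% (m * G2) < N %% (m * G1),
      (((rt1%:Z - rt2%:Z)%:~R / m%:R : rat) < - ((sigma G1 G2 j)%:R / 2%:R))%R ->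
        N %% (m * G1) < N %% (m * G2)
    & (- ((sigma G1 G2 j)%:R / 2%:R) <= ((rt1%:Z - rt2%:Z)%:~R / m%:R : rat))%R ->
      (((rt1%:Z - rt2%:Z)%:~R / m%:R : rat) < (sigma G1 G2 j)%:R / 2%:R)%R ->
        N %% (m * G1) = N %% (m * G2)].
Proof.
move=> m_gt0 _ G1_gt1 lt_G12 _ _ _ N_lt _ _.
move: N_lt; rewrite leq_min !add1n => /andP[N_lt2 N_lt1].
have G1_gt0 := ltnW G1_gt1.
have apart := remainders_equal_or_apart m_gt0 G1_gt0 (ltn_trans G1_gt0 lt_G12)
  N_lt1 N_lt2 (@mulmod_gap_max G1 G2 _) (@mulmod_gap_max G2 G1 _).
set e := (_ / m%:R)%R => le_e lt_e.
have -> : ((rt1%:Z - rt2%:Z)%:~R / m%:R : rat)%R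
    = (e + ((N %% (m * G1))%:Z - (N %% (m * G2))%:Z)%:~R / m%:R)%R.
  by rewrite /e -mulrDl -rmorphD /=; congr (_%:~R / _)%R; ring.
exact: decide_remainder_order m_gt0 le_e lt_e apart.
Qed.
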